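(* Let $\mathcal A=\{\mathbf p\in[0,1]^4: p_1=1\}$ be the set of agreeable memory-one strategies, with the subspace topology from $\mathbb R^4$. The set $\{\mathbf p\in\mathcal A:\ \mathbf p=(1,1,0,0)\text{ or }\mathbf p\text{ is of Nash type}\}$ is a closed convex set whose interior (relative to $\mathcal A$) is the set of good strategies.
   Context: Iterated Prisoner's Dilemma: payoffs $T>R>P>S$ with $2R>T+S$; outcomes of a round are ordered $cc,cd,dc,dd$ (first letter X's play, second Y's; $c$ = cooperate, $d$ = defect); payoff vectors $\mathbf S_X=(R,S,T,P)$, $\mathbf S_Y=(R,T,S,P)$. A memory-one strategy for X is $\mathbf p=(p_1,p_2,p_3,p_4)\in[0,1]^4$, where $p_i$ is the probability that X plays $c$ in the next round given that the current round had the $i$-th outcome. A strategy pattern for Y is an arbitrary (possibly randomized and history-dependent) rule for Y's play in each round. Given initial plays and the rules used, let $\mathbf v^n$ be the probability distribution of the outcome of round $n$; a limit distribution is any limit point $\mathbf v$ of the Cesàro averages $\frac1n\sum_{k=1}^n\mathbf v^k$, and the associated expected payoffs are $s_X=\langle\mathbf v\cdot\mathbf S_X\rangle$, $s_Y=\langle\mathbf v\cdot\mathbf S_Y\rangle$. $\mathbf p$ is agreeable if $p_1=1$. $\mathbf p$ is of Nash type if it is agreeable and, for every strategy pattern of Y and every associated limit distribution, $s_Y\ge R$ implies $s_Y=R$. $\mathbf p$ is good if it is agreeable and, for every strategy pattern of Y and every associated limit distribution, $s_Y\ge R$ implies $s_Y=s_X=R$. *)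

From mathcomp Require Import all_boot all_order all_algebra.
From mathcomp Require Import reals.
Set Implicit Arguments. Unset Strict Implicit. Unset Printing Implicit Defensive.
Import Order.TTheory GRing.Theory Num.Theory.
Local Open Scope ring_scope.

(* Outcomes of a round, ordered cc, cd, dc, dd, encoded as 'I_4 = {0,1,2,3}.
   First letter = X's play, second = Y's play. *)
Definition outcome := 'I_4.
Definition xcoop (o : outcome) : bool := (o < 2)%N.
Definition ycoop (o : outcome) : bool := ~~ odd o.

Section IPD.
Variable R : realType.

Definition prplay (b : bool) (x : R) : R := if b then x else 1 - x.

(* A memory-one strategy is a row vector p = (p_1,p_2,p_3,p_4) in [0,1]^4;
   p ord0 i is the probability of playing c after the i-th outcome. *)
Definition is_strategy (p : 'rV[R]_4) : Prop := forall i, 0 <= p ord0 i <= 1.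
Definition agreeable (p : 'rV[R]_4) : Prop :=
  is_strategy p /\ p ord0 (0 : 'I_4) = 1.

(* A strategy pattern for Y: for every finite history (chronological list of
   outcomes of previous rounds) the probability that Y cooperates in the next
   round. *)
Definition strategy_pattern (q : seq outcome -> R) : Prop :=
  forall h, 0 <= q h <= 1.

(* Probability that X cooperates next, given the reversed history rh
   (most recent outcome first); x0 is X's initial cooperation probability. *)
Definition xprob (p : 'rV[R]_4) (x0 : R) (rh : seq outcome) : R :=
  if rh is o :: _ then p ord0 o else x0.

Fixpoint hprob (p : 'rV[R]_4) (x0 : R) (q : seq outcome -> R)
    (rh : seq outcome) : R :=
  if rh is o :: rh' then
    hprob p x0 q rh' * prplay (xcoop o) (xprob p x0 rh')
      * prplay (ycoop o) (q (rev rh'))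
  else 1.

(* v^(n+1): distribution of the outcome of round n+1 (rounds numbered from 1),
   obtained by summing over all histories of the first n rounds. *)
Definition vround (p : 'rV[R]_4) (x0 : R) (q : seq outcome -> R) (n : nat)
    (o : outcome) : R :=
  \sum_(h : n.-tuple outcome) hprob p x0 q (o :: tval h).

(* Cesaro average (1/N) sum_{k=1}^{N} v^k, for N = n+1 *)
Definition cesaro (p : 'rV[R]_4) (x0 : R) (q : seq outcome -> R) (n : nat)
    (o : outcome) : R :=
  (n.+1%:R)^-1 * \sum_(k < n.+1) vround p x0 q k o.

Definition limit_dist (p : 'rV[R]_4) (x0 : R) (q : seq outcome -> R)
    (v : outcome -> R) : Prop :=
  forall eps : R, 0 < eps -> forall N : nat, exists2 n : nat, (N <= n)%N &
    forall o, `|cesaro p x0 q n o - v o| < eps.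

Definition sX (pT pR pP pS : R) (v : outcome -> R) : R :=
  v 0 * pR + v 1 * pS + v 2 * pT + v 3 * pP.
Definition sY (pT pR pP pS : R) (v : outcome -> R) : R :=
  v 0 * pR + v 1 * pT + v 2 * pS + v 3 * pP.

Definition nash_type (pT pR pP pS : R) (p : 'rV[R]_4) : Prop :=
  agreeable p /\
  forall (x0 : R) (q : seq outcome -> R) (v : outcome -> R),
    0 <= x0 <= 1 -> strategy_pattern q -> limit_dist p x0 q v ->
    pR <= sY pT pR pP pS v -> sY pT pR pP pS v = pR.

Definition good (pT pR pP pS : R) (p : 'rV[R]_4) : Prop :=
  agreeable p /\
  forall (x0 : R) (q : seq outcome -> R) (v : outcome -> R),
    0 <= x0 <= 1 -> strategy_pattern q -> limit_dist p x0 q v ->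
    pR <= sY pT pR pP pS v ->
    sY pT pR pP pS v = pR /\ sX pT pR pP pS v = pR.

Definition repeat_strat : 'rV[R]_4 :=
  \row_(i < 4) (if (i < 2)%N then 1 else 0).

Definition nash_set (pT pR pP pS : R) (p : 'rV[R]_4) : Prop :=
  agreeable p /\ (p = repeat_strat \/ nash_type pT pR pP pS p).

(* sup-distance on R^4 (induces the Euclidean topology) *)
Definition dist4 (p q : 'rV[R]_4) : R := \big[Num.max/0]_(i < 4) `|p ord0 i - q ord0 i|.

Definition rel_closed (Sset : 'rV[R]_4 -> Prop) : Prop :=
  (forall p, Sset p -> agreeable p) /\
  forall p, agreeable p ->
    (forall eps : R, 0 < eps -> exists q, Sset q /\ dist4 p q < eps) ->
    Sset p.

Definition rel_interior (Sset : 'rV[R]_4 -> Prop) (p : 'rV[R]_4) : Prop :=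
  agreeable p /\
  exists2 eps : R, 0 < eps &
    forall q, agreeable q -> dist4 p q < eps -> Sset q.

Definition convex_set (Sset : 'rV[R]_4 -> Prop) : Prop :=
  forall p q (t : R), Sset p -> Sset q -> 0 <= t <= 1 ->
    Sset (t *: p + (1 - t) *: q).

End IPD.

(* Akin's lemma: the probability that X cooperates changes from round k to
   round k+1 by v^k . (p - (1,1,0,0)), so this quantity telescopes and every
   limit distribution v satisfies v . (p - (1,1,0,0)) = 0 (limit distributions
   exist by compactness of [0,1]^4).  For agreeable p this turns the payoff
   into (1 - p_2)(s_Y - R) = v_3 ((T-R) p_3 - (R-S)(1-p_2))
                              + v_4 ((T-R) p_4 - (R-P)(1-p_2)),
   so p is of Nash type when both brackets are <= 0 and p_2 < 1, and good when
   both are < 0.  Conversely, AllD earns T against p when p_2 = 1, and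
   otherwise AllD (resp. Y defecting exactly after cc) produces a limit
   distribution charging v_4 (resp. v_3), so a nonnegative bracket lets Y get
   at least R while X gets less.  Hence the set of the corollary is cut out
   of A by two affine inequalities (Repeat satisfies both with equality): it
   is closed and convex, and, since moving towards AllC strictly increases
   both brackets, its relative interior is where both are strict, i.e. the
   good strategies. *)

From mathcomp Require Import all_boot all_order all_algebra.
From mathcomp Require Import reals classical_sets topology normedtype.
From mathcomp Require Import ring lra.
Import Order.TTheory GRing.Theory Num.Theory.
Set Implicit Arguments. Unset Strict Implicit. Unset Printing Implicit Defensive.
Local Open Scope ring_scope.

Lemma one_in01 (R : numDomainType) : 0 <= (1 : R) <= 1.
Proof. by rewrite ler01 lexx. Qed.

Lemma sum_outcome (V : nmodType) (F : outcome -> V) :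
  \sum_(o : outcome) F o = F 0 + F 1 + F 2 + F 3.
Proof.
rewrite !big_ord_recl big_ord0 addr0 !addrA.
by congr (_ + _ + _ + _); congr F; apply/val_inj.
Qed.

Lemma outcome_ind (P : outcome -> Prop) : P 0 -> P 1 -> P 2 -> P 3 -> forall o, P o.
Proof.
move=> P0 P1 P2 P3 [[|[|[|[|n]]]] lt_n4] //.
- by have -> : Ordinal lt_n4 = 0 by apply/val_inj.
- by have -> : Ordinal lt_n4 = 1 by apply/val_inj.
- by have -> : Ordinal lt_n4 = 2 by apply/val_inj.
- by have -> : Ordinal lt_n4 = 3 by apply/val_inj.
Qed.

Lemma big_tuple_cons (V : nmodType) (T : finType) n (F : seq T -> V) :
  \sum_(h : n.+1.-tuple T) F h = \sum_(o : T) \sum_(h : n.-tuple T) F (o :: h).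
Proof.
rewrite pair_big /=.
rewrite (reindex (fun t : n.+1.-tuple T => (thead t, [tuple of behead t]))) /=.
  by apply: eq_bigr => t _; rewrite [in LHS](tuple_eta t).
exists (fun x : T * n.-tuple T => [tuple of x.1 :: x.2]).
  by move=> t _; rewrite -tuple_eta.
by case=> o t _ /=; rewrite theadE; congr pair; apply/val_inj.
Qed.

Section LimitPoints.
Variable R : realType.

Definition limit_point (u : nat -> R) (l : R) : Prop :=
  forall eps : R, 0 < eps -> forall N, exists2 n, (N <= n)%N & `|u n - l| < eps.

Lemma limit_point_ge0 u l : (forall n, 0 <= u n) -> limit_point u l -> 0 <= l.
Proof.
move=> u_ge0 ul; rewrite leNgt; apply/negP => l_lt0.
have [n _] : exists2 n, (0 <= n)%N & `|u n - l| < - l by apply: ul; rewrite oppr_gt0.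
by rewrite ltr_norml => /andP[_]; have := u_ge0 n; lra.
Qed.

Lemma limit_point_eq_of_rate u l b (K : R) : 0 <= K ->
  (forall n, `|u n - b| <= K / n.+1%:R) -> limit_point u l -> l = b.
Proof.
move=> K_ge0 u_rate ul; apply/eqP; rewrite -subr_eq0 -normr_le0.
apply/ler_addgt0Pr => e e_gt0; rewrite add0r.
have e2_gt0 : 0 < e / 2 by rewrite divr_gt0.
have [n Kn lu] := ul _ e2_gt0 (Num.bound (K / (e / 2))).
have Ke : K / n.+1%:R <= e / 2.
  have Kn_le : K / (e / 2) <= n.+1%:R.
    apply: le_trans (ltW (archi_boundP (divr_ge0 K_ge0 (ltW e2_gt0)))) _.
    by rewrite ler_nat ltnW.
  by rewrite ler_pdivrMr ?ltr0n // mulrC -ler_pdivrMr.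
apply: le_trans (ler_distD (u n) l b) _; rewrite (splitr e) distrC.
by apply: lerD; [exact: ltW | exact: le_trans (u_rate n) Ke].
Qed.

Lemma joint_limit_point_sum (I : finType) (w : nat -> I -> R) (v g : I -> R) :
  (forall eps : R, 0 < eps -> forall N, exists2 n, (N <= n)%N &
     forall i, `|w n i - v i| < eps) ->
  limit_point (fun n => \sum_i w n i * g i) (\sum_i v i * g i).
Proof.
move=> wv eps eps_gt0 N.
set G := \sum_i `|g i|.
have G_ge0 : 0 <= G by rewrite sumr_ge0.
have [n Nn wvn] := wv (eps / (G + 1)) (divr_gt0 eps_gt0 (ltr_wpDl G_ge0 ltr01)) N.
exists n => //; rewrite -sumrB.
apply: le_lt_trans (ler_norm_sum _ _ _) _.
apply: (@le_lt_trans _ _ (\sum_i eps / (G + 1) * `|g i|)).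
  apply: ler_sum => i _; rewrite -mulrBl normrM ler_wpM2r //.
  exact: ltW.
rewrite -mulr_sumr -/G mulrAC ltr_pdivrMr ?ltr_wpDl //.
by rewrite ltr_pM2l // ltrDl.
Qed.

Local Open Scope classical_set_scope.

Lemma rV_unit_cube_limit_point n (w : nat -> 'rV[R]_n) :
  (forall k i, 0 <= w k ord0 i <= 1) ->
  exists v : 'rV[R]_n, forall eps, 0 < eps -> forall N,
    exists2 k, (N <= k)%N & forall i, `|w k ord0 i - v ord0 i| < eps.
Proof.
move=> w01.
have cube := @rV_compact R^o n (fun=> `[0, 1]) (fun=> @segment_compact R 0 1).
have [|v [_ clv]] := cube (w @ \oo) _.
  by exists 0%N => // k _ i; rewrite /= in_itv /=; apply: w01.
exists v => eps eps_gt0 N.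
have [|_ [[k Nk <-] vwk]] := clv [set w k | k in [set k | (N <= k)%N]] (ball v eps) _
  (nbhsx_ballx _ _ eps_gt0).
  by exists N => // k Nk; exists k.
exists k => // i; rewrite distrC.
by have [_ /(_ ord0 i)] := vwk; rewrite /ball /=.
Qed.

End LimitPoints.

Section Play.
Variables (R : realType) (p : 'rV[R]_4) (x0 : R) (q : seq outcome -> R).
Hypotheses (hp : is_strategy p) (hx0 : 0 <= x0 <= 1) (hq : strategy_pattern q).

Local Notation vr := (vround p x0 q).
Local Notation cr := (cesaro p x0 q).

Lemma prplay_ge0 b (x : R) : 0 <= x <= 1 -> 0 <= prplay b x.
Proof. by case: b => /andP[? ?] /=; lra. Qed.

Lemma hprob_ge0 rh : 0 <= hprob p x0 q rh.
Proof.
have xprob01 rh' : 0 <= xprob p x0 rh' <= 1 by case: rh' => [|o rh'] //=; apply: hp.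
elim: rh => [|o rh IH] /=; first exact: ler01.
by rewrite !mulr_ge0 // prplay_ge0.
Qed.

Lemma sum_prplay (a b : R) :
  \sum_(o : outcome) prplay (xcoop o) a * prplay (ycoop o) b = 1.
Proof. by rewrite sum_outcome /=; ring. Qed.

Lemma sum_hprob k : \sum_(h : k.-tuple outcome) hprob p x0 q h = 1.
Proof.
elim: k => [|k IH].
  rewrite (eq_bigr (fun _ => 1)); last by move=> t _; rewrite tuple0.
  by rewrite sumr_const card_tuple expn0.
rewrite big_tuple_cons exchange_big /= -IH; apply: eq_bigr => h _ /=.
under eq_bigr do rewrite -mulrA.
by rewrite -mulr_sumr sum_prplay mulr1.
Qed.

Lemma vround_sum1 k : \sum_(o : outcome) vr k o = 1.
Proof. by rewrite -(sum_hprob k.+1) big_tuple_cons. Qed.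

Lemma vround_ge0 k o : 0 <= vr k o.
Proof. by apply: sumr_ge0 => h _; exact: hprob_ge0. Qed.

Lemma vround_le1 k o : vr k o <= 1.
Proof.
rewrite -(vround_sum1 k) (bigD1 o) //= lerDl.
by apply: sumr_ge0 => *; exact: vround_ge0.
Qed.

Lemma vround0 o : vr 0 o = prplay (xcoop o) x0 * prplay (ycoop o) (q [::]).
Proof.
rewrite /vround (eq_bigr (fun _ => hprob p x0 q [:: o])); last first.
  by move=> t _; rewrite tuple0.
by rewrite sumr_const card_tuple expn0 /= mul1r.
Qed.

Lemma vroundS k o' : vr k.+1 o' =
  \sum_(o : outcome) \sum_(h : k.-tuple outcome)
     hprob p x0 q (o :: h) * prplay (xcoop o') (p ord0 o)
       * prplay (ycoop o') (q (rev (o :: h))).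
Proof. by rewrite /vround (@big_tuple_cons _ _ _ (fun s => hprob p x0 q (o' :: s))). Qed.

Lemma xcoopS k : vr k.+1 0 + vr k.+1 1 = \sum_(o : outcome) vr k o * p ord0 o.
Proof.
rewrite !vroundS -big_split /=; apply: eq_bigr => o _.
rewrite -big_split /= /vround mulr_suml; apply: eq_bigr => h _ /=.
ring.
Qed.

Lemma cesaro_ge0 n o : 0 <= cr n o.
Proof.
rewrite /cesaro mulr_ge0 ?invr_ge0 ?ler0n //.
by apply: sumr_ge0 => *; exact: vround_ge0.
Qed.

Lemma cesaro_sum1 n : \sum_(o : outcome) cr n o = 1.
Proof.
rewrite /cesaro -mulr_sumr exchange_big /=.
under eq_bigr do rewrite vround_sum1.
by rewrite sumr_const card_ord mulVf // pnatr_eq0.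
Qed.

Lemma cesaro_le1 n o : cr n o <= 1.
Proof.
rewrite -(cesaro_sum1 n) (bigD1 o) //= lerDl.
by apply: sumr_ge0 => *; exact: cesaro_ge0.
Qed.

Let xc k := vr k 0 + vr k 1.

Lemma xc_le1 k : xc k <= 1.
Proof.
rewrite -(vround_sum1 k) sum_outcome /xc.
by have := vround_ge0 k 2; have := vround_ge0 k 3; lra.
Qed.

(* The summand for round k is [xc k.+1 - xc k], so the sum telescopes:
   this is Akin's lemma. *)
Lemma cesaro_akin_rate n :
  `| \sum_(o : outcome) cr n o * (p ord0 o - (xcoop o)%:R) | <= 1 / n.+1%:R.
Proof.
have xc01 k : 0 <= xc k <= 1 by rewrite addr_ge0 ?vround_ge0 ?xc_le1.
have -> : \sum_(o : outcome) cr n o * (p ord0 o - (xcoop o)%:R) =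
    (xc n.+1 - xc 0) / n.+1%:R.
  rewrite mulrC /cesaro.
  under eq_bigr do rewrite -mulrA.
  rewrite -mulr_sumr; congr (_ * _).
  rewrite -(telescope_sumr xc (leq0n n.+1)) big_mkord.
  under eq_bigr do rewrite mulr_suml.
  rewrite exchange_big /=; apply: eq_bigr => k _.
  by rewrite /xc xcoopS !sum_outcome /=; ring.
rewrite normrM [`|_^-1|]ger0_norm ?invr_ge0 ?ler0n // mul1r.
rewrite -[leRHS]mul1r ler_wpM2r ?invr_ge0 ?ler0n //.
by have := xc01 n.+1; have := xc01 0; rewrite ler_norml; lra.
Qed.

Lemma exists_limit_dist : exists v, limit_dist p x0 q v.
Proof.
have [|v cv] := @rV_unit_cube_limit_point R 4 (fun n => \row_o cr n o).
  by move=> k i; rewrite mxE cesaro_ge0 cesaro_le1.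
exists (fun o => v ord0 o) => eps /cv cvN N.
have [n Nn close] := cvN N.
by exists n => // o; have := close o; rewrite mxE.
Qed.

Section Limit.
Variable v : outcome -> R.
Hypothesis pqv : limit_dist p x0 q v.

Lemma limit_dist_sum g : limit_point (fun n => \sum_o cr n o * g o) (\sum_o v o * g o).
Proof. exact: joint_limit_point_sum. Qed.

Lemma limit_dist_coord o : limit_point (fun n => cr n o) (v o).
Proof. by move=> eps /pqv pqv_eps N; have [n Nn] := pqv_eps N; exists n. Qed.

Lemma limit_dist_eq0 o : (forall k, vr k o = 0) -> v o = 0.
Proof.
move=> vr0; apply: (limit_point_eq_of_rate (lexx 0) _ (limit_dist_coord o)) => n.
by rewrite /cesaro big1 ?mulr0 ?subrr ?normr0 ?mul0r.
Qed.

Lemma akin_limit_dist :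
  [/\ forall o, 0 <= v o, v 0 + v 1 + v 2 + v 3 = 1 &
      v 0 * (p ord0 0 - 1) + v 1 * (p ord0 1 - 1) + v 2 * p ord0 2 + v 3 * p ord0 3 = 0].
Proof.
split.
- by move=> o; apply: limit_point_ge0 (limit_dist_coord o) => n; exact: cesaro_ge0.
- have := limit_point_eq_of_rate (b := 1) (lexx 0) _ (limit_dist_sum (fun _ => 1)).
  rewrite sum_outcome !mulr1 => -> // n.
  by under eq_bigr do rewrite mulr1; rewrite cesaro_sum1 subrr normr0 mul0r.
- have := limit_point_eq_of_rate (b := 0) ler01 _
    (limit_dist_sum (fun o => p ord0 o - (xcoop o)%:R)).
  rewrite sum_outcome /= !subr0; apply=> n.
  by rewrite subr0; exact: cesaro_akin_rate.
Qed.

End Limit.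

End Play.

Lemma vround_X_always_cooperates (R : realType) (p : 'rV[R]_4) q :
  is_strategy p -> strategy_pattern q -> p ord0 0 = 1 -> p ord0 1 = 1 ->
  forall k o, ~~ xcoop o -> vround p 1 q k o = 0.
Proof.
move=> hp hq p0_1 p1_1 k o.
have vr_ge0 := vround_ge0 hp (one_in01 R) hq.
have xc1 : vround p 1 q k 0 + vround p 1 q k 1 = 1.
  elim: k => [|k IH]; first by rewrite !vround0 /=; ring.
  apply/eqP; rewrite eq_le (xc_le1 hp (one_in01 R) hq) /= xcoopS sum_outcome p0_1 p1_1.
  have /andP[? _] := hp 2; have /andP[? _] := hp 3.
  have := vr_ge0 k 2; have := vr_ge0 k 3; nra.
have := vround_sum1 p 1 q k; rewrite sum_outcome xc1.
have := vr_ge0 k 2; have := vr_ge0 k 3.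
by elim/outcome_ind: o => //= *; lra.
Qed.

Section Opponents.
Variables (R : realType) (p : 'rV[R]_4).
Hypotheses (hp : is_strategy p) (p0_1 : p ord0 0 = 1).

Definition always_defect : seq outcome -> R := fun _ => 0.

(* The default outcome [3] (dd) makes Y cooperate in the first round. *)
Definition defect_after_cc : seq outcome -> R :=
  fun h => if last 3 h == 0 then 0 else 1.

Lemma always_defect_pattern : strategy_pattern always_defect.
Proof. by move=> h; rewrite /always_defect lexx ler01. Qed.

Lemma defect_after_cc_pattern : strategy_pattern defect_after_cc.
Proof. by move=> h; rewrite /defect_after_cc; case: ifP; rewrite ?lexx ?ler01. Qed.

Lemma always_defect_limit v : limit_dist p 1 always_defect v ->
  [/\ v 0 = 0, v 2 = 0 & p ord0 1 = 1 -> v 3 = 0].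
Proof.
move=> pv.
have Yd o : ycoop o -> v o = 0.
  by move=> yo; apply: (limit_dist_eq0 pv) => k; rewrite /vround big1 // => h _ /=; rewrite yo /always_defect mulr0.
split; [exact: Yd | exact: Yd | move=> p1_1].
apply: (limit_dist_eq0 pv) => k.
exact: vround_X_always_cooperates hp always_defect_pattern p0_1 p1_1 k 3 isT.
Qed.

Lemma defect_after_cc_rev_cons o h :
  defect_after_cc (rev (o :: h)) = if o == 0 then 0 else 1.
Proof. by rewrite /defect_after_cc rev_cons last_rcons. Qed.

Lemma defect_after_cc_no_dd k : vround p 1 defect_after_cc k 3 = 0.
Proof.
rewrite /vround big1 // => -[[|o h] _] /=; first by rewrite subrr !mulr0.
rewrite defect_after_cc_rev_cons; case: eqP => [->|_]; first by rewrite p0_1 subrr mulr0 mul0r.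
by rewrite subrr mulr0.
Qed.

Lemma defect_after_cc_cd_succ k :
  vround p 1 defect_after_cc k.+1 1 = vround p 1 defect_after_cc k 0.
Proof.
rewrite vroundS sum_outcome.
have after o : \sum_(h : k.-tuple outcome) hprob p 1 defect_after_cc (o :: h)
      * prplay (xcoop 1) (p ord0 o) * prplay (ycoop 1) (defect_after_cc (rev (o :: h)))
    = if o == 0 then vround p 1 defect_after_cc k 0 else 0.
  case: eqP => [->|/eqP o_neq0].
    by apply: eq_bigr => h _; rewrite defect_after_cc_rev_cons /= p0_1; ring.
  by apply: big1 => h _; rewrite defect_after_cc_rev_cons (negbTE o_neq0) /= subrr mulr0.
by rewrite !after /=; ring.
Qed.

Lemma defect_after_cc_limit v : limit_dist p 1 defect_after_cc v -> v 0 = v 1 /\ v 3 = 0.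
Proof.
move=> pv; split; last by apply: (limit_dist_eq0 pv) => k; exact: defect_after_cc_no_dd.
have pat := defect_after_cc_pattern; have h01 := one_in01 R.
pose g (o : outcome) : R := (o == 1)%:R - (o == 0)%:R.
suff: \sum_o v o * g o = 0 by rewrite sum_outcome /g /=; lra.
apply: (limit_point_eq_of_rate ler01 _ (limit_dist_sum pv g)) => n.
have sum_cd : \sum_(k < n.+1) vround p 1 defect_after_cc k 1 =
    \sum_(k < n.+1) vround p 1 defect_after_cc k 0 - vround p 1 defect_after_cc n 0.
  rewrite big_ord_recl big_ord_recr /= addrK vround0 /= /defect_after_cc /= subrr mulr0 add0r.
  by apply: eq_bigr => i _; rewrite /bump /= add1n defect_after_cc_cd_succ.
have -> : \sum_o cesaro p 1 defect_after_cc n o * g o - 0 =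
    - vround p 1 defect_after_cc n 0 / n.+1%:R.
  by rewrite subr0 sum_outcome /g /cesaro /= sum_cd; ring.
rewrite normrM normrN mul1r [`|_^-1|]ger0_norm ?invr_ge0 ?ler0n //.
rewrite ger0_norm ?(vround_ge0 hp h01 pat) //.
by rewrite -[leRHS]mul1r ler_wpM2r ?invr_ge0 ?ler0n ?(vround_le1 hp h01 pat).
Qed.

End Opponents.

Section Distance.
Variable R : realType.
Implicit Types p q : 'rV[R]_4.

Lemma dist4_coord p q i : `|p ord0 i - q ord0 i| <= dist4 p q.
Proof. exact: le_bigmax. Qed.

Lemma dist4C p q : dist4 p q = dist4 q p.
Proof. by apply: eq_bigr => i _; rewrite distrC. Qed.

Definition all_cooperate : 'rV[R]_4 := const_mx 1.

Lemma agreeable_all_cooperate : agreeable all_cooperate.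
Proof. by split=> [i|]; rewrite mxE // lexx ler01. Qed.

Lemma agreeable_convex p q t : agreeable p -> agreeable q -> 0 <= t <= 1 ->
  agreeable (t *: p + (1 - t) *: q).
Proof.
move=> [hp p0_1] [hq q0_1] /andP[t_ge0 t_le1]; split; last first.
  by rewrite !mxE p0_1 q0_1; ring.
move=> i; rewrite !mxE; have /andP[? ?] := hp i; have /andP[? ?] := hq i.
apply/andP; split; nra.
Qed.

Lemma dist4_toward_all_cooperate p t : agreeable p -> 0 <= t <= 1 ->
  dist4 p (t *: p + (1 - t) *: all_cooperate) <= 1 - t.
Proof.
move=> [hp _] /andP[t_ge0 t_le1]; apply: bigmax_le => [|i _]; first lra.
rewrite !mxE mulr1 (_ : _ - _ = (1 - t) * (p ord0 i - 1)); last by ring.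
have /andP[? ?] := hp i.
by rewrite normrM ger0_norm ?subr_ge0 // ler_piMr ?subr_ge0 // ler_norml; lra.
Qed.

End Distance.

Section Game.
Variables (R : realType) (pT pR pP pS : R).
Hypotheses (SP : pS < pP) (PR : pP < pR) (RT : pR < pT) (TS2R : pT + pS < 2 * pR).
Implicit Types (p q : 'rV[R]_4) (v : outcome -> R).

(* [gap_dc p <= 0] and [gap_dd p <= 0] are Akin's inequalities
   (T - R) p_3 <= (R - S) (1 - p_2) and (T - R) p_4 <= (R - P) (1 - p_2). *)
Definition gap (b : R) (i : outcome) (p : 'rV[R]_4) : R :=
  (pT - pR) * p ord0 i - b * (1 - p ord0 1).

Let RS_gt0 : 0 < pR - pS. Proof. by rewrite subr_gt0 (lt_trans SP). Qed.
Let RP_gt0 : 0 < pR - pP. Proof. by rewrite subr_gt0. Qed.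

Local Notation gap_dc := (gap (pR - pS) 2).
Local Notation gap_dd := (gap (pR - pP) 3).

Definition admissible p x0 (y : seq outcome -> R) v : Prop :=
  [/\ 0 <= x0 <= 1, strategy_pattern y & limit_dist p x0 y v].

Lemma sY_sub_R_gaps p v : p ord0 0 = 1 -> v 0 + v 1 + v 2 + v 3 = 1 ->
  v 0 * (p ord0 0 - 1) + v 1 * (p ord0 1 - 1) + v 2 * p ord0 2 + v 3 * p ord0 3 = 0 ->
  (1 - p ord0 1) * (sY pT pR pP pS v - pR) = v 2 * gap_dc p + v 3 * gap_dd p.
Proof.
move=> p0_1 v_sum1 akin.
have -> : (1 - p ord0 1) * (sY pT pR pP pS v - pR) = v 2 * gap_dc p + v 3 * gap_dd p +
    (pR - pT) * (v 0 * (p ord0 0 - 1) + v 1 * (p ord0 1 - 1) + v 2 * p ord0 2 + v 3 * p ord0 3)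
      + (1 - p ord0 1) * pR * (v 0 + v 1 + v 2 + v 3 - 1).
  by rewrite /sY /gap p0_1; ring.
by rewrite akin v_sum1 subrr !mulr0 !addr0.
Qed.

Lemma nash_type_of_gaps p : agreeable p -> p ord0 1 < 1 ->
  gap_dc p <= 0 -> gap_dd p <= 0 -> nash_type pT pR pP pS p.
Proof.
move=> [hp p0_1] p1_lt1 dc_le0 dd_le0; split=> // x0 q v hx0 hq pqv R_le_sY.
have [v_ge0 v_sum1 akin] := akin_limit_dist hp hx0 hq pqv.
have : (1 - p ord0 1) * (sY pT pR pP pS v - pR) <= 0.
  rewrite sY_sub_R_gaps //.
  by have := mulr_ge0_le0 (v_ge0 2) dc_le0; have := mulr_ge0_le0 (v_ge0 3) dd_le0; lra.
by rewrite pmulr_rle0 ?subr_gt0 //; lra.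
Qed.

Lemma good_of_gaps p : agreeable p -> gap_dc p < 0 -> gap_dd p < 0 -> good pT pR pP pS p.
Proof.
move=> [hp p0_1] dc_lt0 dd_lt0.
have p1_lt1 : p ord0 1 < 1.
  rewrite lt_neqAle; have /andP[_ ->] := hp 1; rewrite andbT; apply/eqP => p1_1.
  move: dc_lt0; rewrite /gap p1_1 subrr mulr0 subr0 pmulr_rlt0 ?subr_gt0 // ltNge.
  by have /andP[-> _] := hp 2.
split=> // x0 q v hx0 hq pqv R_le_sY.
have [v_ge0 v_sum1 akin] := akin_limit_dist hp hx0 hq pqv.
have key := sY_sub_R_gaps p0_1 v_sum1 akin.
have v2_ge0 := v_ge0 2; have v3_ge0 := v_ge0 3.
have sY_R : sY pT pR pP pS v = pR by nra.
have v2_0 : v 2 = 0 by nra.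
have v3_0 : v 3 = 0 by nra.
have v1_0 : v 1 = 0 by move: akin; rewrite p0_1 v2_0 v3_0; nra.
have v0_1 : v 0 = 1 by lra.
by split=> //; rewrite /sX v0_1 v1_0 v2_0 v3_0; ring.
Qed.

Lemma good_nash_type p : good pT pR pP pS p -> nash_type pT pR pP pS p.
Proof. by move=> [ap gp]; split=> // x0 q v hx0 hq pqv /(gp x0 q v hx0 hq pqv) []. Qed.

Lemma not_nash_type_of_play p x0 y v : admissible p x0 y v ->
  pR < sY pT pR pP pS v -> ~ nash_type pT pR pP pS p.
Proof. by move=> [hx0 hy pyv] R_lt_sY [_ /(_ x0 y v hx0 hy pyv (ltW R_lt_sY)) sY_R]; lra. Qed.

Lemma not_good_of_play p x0 y v : admissible p x0 y v ->
  pR <= sY pT pR pP pS v -> (sY pT pR pP pS v = pR -> sX pT pR pP pS v < pR) ->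
  ~ good pT pR pP pS p.
Proof.
move=> [hx0 hy pyv] R_le_sY sX_lt [_ /(_ x0 y v hx0 hy pyv R_le_sY) [sY_R sX_R]].
by have := sX_lt sY_R; lra.
Qed.

Section Witnesses.
Variable p : 'rV[R]_4.
Hypothesis ap : agreeable p.

Let h01 := one_in01 R.

Lemma always_defect_exploits : p ord0 1 = 1 ->
  exists v, admissible p 1 (always_defect R) v /\ sY pT pR pP pS v = pT.
Proof.
have [hp p0_1] := ap; move=> p1_1.
have [v pv] := exists_limit_dist hp h01 (always_defect_pattern R).
exists v; split; first by split; [exact: h01 | exact: always_defect_pattern | ].
have [v0_0 v2_0 /(_ p1_1) v3_0] := always_defect_limit hp p0_1 pv.
have [_ v_sum1 _] := akin_limit_dist hp h01 (always_defect_pattern R) pv.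
have v1_1 : v 1 = 1 by lra.
by rewrite /sY v0_0 v1_1 v2_0 v3_0; ring.
Qed.

Lemma always_defect_play : p ord0 1 < 1 -> 0 <= gap_dd p ->
  exists v, admissible p 1 (always_defect R) v /\
    [/\ pR <= sY pT pR pP pS v, 0 < gap_dd p -> pR < sY pT pR pP pS v &
        sX pT pR pP pS v < pR].
Proof.
have [hp p0_1] := ap; move=> p1_lt1 dd_ge0.
have [v pv] := exists_limit_dist hp h01 (always_defect_pattern R).
exists v; split; first by split; [exact: h01 | exact: always_defect_pattern | ].
have [v0_0 v2_0 _] := always_defect_limit hp p0_1 pv.
have [v_ge0 v_sum1 akin] := akin_limit_dist hp h01 (always_defect_pattern R) pv.
have key := sY_sub_R_gaps p0_1 v_sum1 akin; rewrite v2_0 mul0r add0r in key.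
move: akin v_sum1; rewrite v0_0 v2_0 !mul0r !add0r => akin v_sum1.
have v3_gt0 : 0 < v 3.
  by rewrite lt_def v_ge0 andbT; apply/eqP => v3_0; move: akin; rewrite v3_0; nra.
have v1_ge0 := v_ge0 1; split; [nra | nra |].
have v1_eq : v 1 = 1 - v 3 by lra.
have -> : sX pT pR pP pS v = pS + v 3 * (pP - pS) by rewrite /sX v0_0 v2_0 v1_eq; ring.
have : v 3 * (pP - pS) <= pP - pS by rewrite ler_piMl ?subr_ge0 ?(ltW SP) //; lra.
by have := PR; lra.
Qed.

Lemma defect_after_cc_play : p ord0 1 < 1 -> 0 <= gap_dc p ->
  exists v, admissible p 1 (defect_after_cc R) v /\
    [/\ pR <= sY pT pR pP pS v, 0 < gap_dc p -> pR < sY pT pR pP pS v &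
        sY pT pR pP pS v = pR -> sX pT pR pP pS v < pR].
Proof.
have [hp p0_1] := ap; move=> p1_lt1 dc_ge0.
have [v pv] := exists_limit_dist hp h01 (defect_after_cc_pattern R).
exists v; split; first by split; [exact: h01 | exact: defect_after_cc_pattern | ].
have [v0_v1 v3_0] := defect_after_cc_limit hp p0_1 pv.
have [v_ge0 v_sum1 akin] := akin_limit_dist hp h01 (defect_after_cc_pattern R) pv.
have key := sY_sub_R_gaps p0_1 v_sum1 akin; rewrite v3_0 mul0r addr0 in key.
move: akin v_sum1; rewrite p0_1 v0_v1 v3_0 subrr !mul0r !addr0 mulr0 add0r.
move=> akin v_sum1.
have v2_gt0 : 0 < v 2.
  by rewrite lt_def v_ge0 andbT; apply/eqP => v2_0; move: akin; rewrite v2_0; nra.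
have v1_ge0 := v_ge0 1; split; [nra | nra |].
move=> sY_R.
have E : sX pT pR pP pS v + sY pT pR pP pS v - 2 * pR * (v 1 + v 1 + v 2) =
    (v 1 + v 2) * (pT + pS - 2 * pR) by rewrite /sX /sY v0_v1 v3_0; ring.
have : (v 1 + v 2) * (pT + pS - 2 * pR) < 0 by rewrite pmulr_rlt0 ?subr_lt0 //; lra.
by rewrite -E v_sum1; lra.
Qed.

End Witnesses.

Lemma nash_type_p1_lt1 p : nash_type pT pR pP pS p -> p ord0 1 < 1.
Proof.
move=> np; have [[hp _] _] := np; rewrite lt_neqAle; have /andP[_ ->] := hp 1.
rewrite andbT; apply/eqP => p1_1.
have [v [pqv sY_T]] := always_defect_exploits np.1 p1_1.
by apply: not_nash_type_of_play pqv _ np; rewrite sY_T.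
Qed.

Lemma gap_repeat_strat b (i : outcome) : (1 < i)%N -> gap b i (repeat_strat R) = 0.
Proof. by move=> lt1i; rewrite /gap !mxE ltnNge lt1i /= subrr !mulr0 subrr. Qed.

Lemma nash_set_gaps p :
  nash_set pT pR pP pS p <-> agreeable p /\ gap_dc p <= 0 /\ gap_dd p <= 0.
Proof.
split=> [[ap [p_rep | np]] | [[hp p0_1] [dc_le0 dd_le0]]].
- by rewrite p_rep in ap *; rewrite !gap_repeat_strat.
- have p1_lt1 := nash_type_p1_lt1 np.
  split=> //; split; rewrite leNgt; apply/negP => gap_gt0.
    have [v [pqv [_ /(_ gap_gt0) R_lt_sY _]]] := defect_after_cc_play ap p1_lt1 (ltW gap_gt0).
    exact: not_nash_type_of_play pqv R_lt_sY np.
  have [v [pqv [_ /(_ gap_gt0) R_lt_sY _]]] := always_defect_play ap p1_lt1 (ltW gap_gt0).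
  exact: not_nash_type_of_play pqv R_lt_sY np.
split=> //; have /andP[_] := hp 1; rewrite le_eqVlt => /orP[/eqP p1_1 | p1_lt1].
  left; apply/rowP; elim/outcome_ind; rewrite !mxE //=.
  + move: dc_le0; rewrite /gap p1_1 subrr mulr0 subr0 pmulr_rle0 ?subr_gt0 //.
    by have /andP[? _] := hp 2; lra.
  + move: dd_le0; rewrite /gap p1_1 subrr mulr0 subr0 pmulr_rle0 ?subr_gt0 //.
    by have /andP[? _] := hp 3; lra.
by right; apply: nash_type_of_gaps.
Qed.

Lemma good_gaps p : good pT pR pP pS p <-> agreeable p /\ gap_dc p < 0 /\ gap_dd p < 0.
Proof.
split=> [gp | [ap [dc_lt0 dd_lt0]]]; last exact: good_of_gaps.
have ap := gp.1; have p1_lt1 := nash_type_p1_lt1 (good_nash_type gp).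
split=> //; split; rewrite ltNge; apply/negP => gap_ge0.
  have [v [pqv [R_le_sY _ sX_lt]]] := defect_after_cc_play ap p1_lt1 gap_ge0.
  exact: not_good_of_play pqv R_le_sY sX_lt gp.
have [v [pqv [R_le_sY _ sX_lt]]] := always_defect_play ap p1_lt1 gap_ge0.
by apply: not_good_of_play pqv R_le_sY _ gp => _.
Qed.

Lemma gap_convex b i p q t :
  gap b i (t *: p + (1 - t) *: q) = t * gap b i p + (1 - t) * gap b i q.
Proof. by rewrite /gap !mxE; ring. Qed.

Lemma gap_all_cooperate b i : gap b i (all_cooperate R) = pT - pR.
Proof. by rewrite /gap !mxE subrr mulr0 subr0 mulr1. Qed.

Lemma gap_lipschitz b i p q : 0 <= b ->
  gap b i q <= gap b i p + (pT - pR + b) * dist4 p q.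
Proof.
move=> b_ge0.
have -> : gap b i q = gap b i p + ((pT - pR) * (q ord0 i - p ord0 i)
    + b * (q ord0 1 - p ord0 1)) by rewrite /gap; ring.
rewrite lerD2l [leRHS]mulrDl; apply: lerD; apply: ler_wpM2l; rewrite ?subr_ge0 ?(ltW RT) //;
  by apply: le_trans (ler_norm _) _; rewrite distrC dist4_coord.
Qed.

Lemma gap_gt0_near b i p : 0 < b -> 0 < gap b i p ->
  exists2 e, 0 < e & forall q, dist4 p q < e -> 0 < gap b i q.
Proof.
move=> b_gt0 gap_gt0; have L_gt0 : 0 < pT - pR + b by rewrite addr_gt0 ?subr_gt0.
exists (gap b i p / (pT - pR + b)) => [|q]; first by rewrite divr_gt0.
rewrite dist4C ltr_pdivlMr // mulrC => near.
by have := gap_lipschitz i q p (ltW b_gt0); lra.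
Qed.

Lemma gap_lt0_near b i p : 0 < b -> gap b i p < 0 ->
  exists2 e, 0 < e & forall q, dist4 p q < e -> gap b i q < 0.
Proof.
move=> b_gt0 gap_lt0; have L_gt0 : 0 < pT - pR + b by rewrite addr_gt0 ?subr_gt0.
exists (- gap b i p / (pT - pR + b)) => [|q]; first by rewrite divr_gt0 ?oppr_gt0.
rewrite ltr_pdivlMr // mulrC => near.
by have := gap_lipschitz i p q (ltW b_gt0); lra.
Qed.

Lemma nash_set_closed : rel_closed (nash_set pT pR pP pS).
Proof.
split=> [p [] // | p ap near_p]; apply/nash_set_gaps.
have gap_le0 b i : 0 < b -> (forall q, nash_set pT pR pP pS q -> gap b i q <= 0) ->
    gap b i p <= 0.
  move=> b_gt0 set_le0; rewrite leNgt; apply/negP => /(gap_gt0_near b_gt0) [e e_gt0 near].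
  have [q [nq /near]] := near_p e e_gt0.
  by rewrite ltNge (set_le0 q nq).
by split=> //; split; apply: gap_le0 => [|q /nash_set_gaps [_ []] //].
Qed.

Lemma nash_set_convex : convex_set (nash_set pT pR pP pS).
Proof.
move=> p q t /nash_set_gaps [ap [p_dc p_dd]] /nash_set_gaps [aq [q_dc q_dd]] t01.
have /andP[t_ge0 t_le1] := t01.
have comb_le0 x y : x <= 0 -> y <= 0 -> t * x + (1 - t) * y <= 0.
  by move=> x_le0 y_le0; rewrite -oppr_ge0 opprD -!mulrN addr_ge0 // mulr_ge0 ?subr_ge0 ?oppr_ge0.
apply/nash_set_gaps; split; first exact: agreeable_convex.
by rewrite !gap_convex !comb_le0.
Qed.

Lemma rel_interior_nash_set_gaps p : rel_interior (nash_set pT pR pP pS) p ->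
  gap_dc p < 0 /\ gap_dd p < 0.
Proof.
move=> [ap [eps eps_gt0 near]].
pose c := eps / (eps + 1).
have c_gt0 : 0 < c by rewrite divr_gt0 // addr_gt0.
have c_lt1 : c < 1 by rewrite ltr_pdivrMr ?addr_gt0 // mul1r ltrDl.
have c_lt_eps : c < eps by rewrite ltr_pdivrMr ?addr_gt0 // ltr_pMr // ltrDr.
have t01 : 0 <= 1 - c <= 1 by apply/andP; split; lra.
have c_eq : 1 - (1 - c) = c by ring.
pose q := (1 - c) *: p + (1 - (1 - c)) *: all_cooperate R.
have /nash_set_gaps [_ [q_dc q_dd]] : nash_set pT pR pP pS q.
  apply: near; first exact: agreeable_convex ap (agreeable_all_cooperate R) t01.
  by apply: le_lt_trans (dist4_toward_all_cooperate ap t01) _; rewrite c_eq.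
have gap_lt0 b i : gap b i q <= 0 -> gap b i p < 0.
  rewrite gap_convex gap_all_cooperate c_eq => gap_q.
  have cTR_gt0 : 0 < c * (pT - pR) by rewrite mulr_gt0 // subr_gt0.
  have : (1 - c) * gap b i p < 0 by lra.
  by rewrite pmulr_rlt0 // subr_gt0.
by split; apply: gap_lt0.
Qed.

Lemma rel_interior_nash_set_of_gaps p : agreeable p -> gap_dc p < 0 -> gap_dd p < 0 ->
  rel_interior (nash_set pT pR pP pS) p.
Proof.
move=> ap dc_lt0 dd_lt0.
have [e1 e1_gt0 near1] := gap_lt0_near RS_gt0 dc_lt0.
have [e2 e2_gt0 near2] := gap_lt0_near RP_gt0 dd_lt0.
split=> //; exists (Num.min e1 e2) => [|q aq]; first by rewrite lt_min e1_gt0.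
rewrite lt_min => /andP[/near1 q_dc /near2 q_dd].
by apply/nash_set_gaps; split=> //; split; apply: ltW.
Qed.

Lemma nash_set_interior p :
  rel_interior (nash_set pT pR pP pS) p <-> good pT pR pP pS p.
Proof.
rewrite good_gaps; split=> [int_p | [ap [dc_lt0 dd_lt0]]].
  by split; [exact: int_p.1 | exact: rel_interior_nash_set_gaps].
exact: rel_interior_nash_set_of_gaps.
Qed.

End Game.

Theorem corollary1p6 (R : realType) (pT pR pP pS : R) :
  pS < pP -> pP < pR -> pR < pT -> pT + pS < 2 * pR ->
  [/\ rel_closed (nash_set pT pR pP pS),
      convex_set (nash_set pT pR pP pS) &
      forall p : 'rV[R]_4,
        rel_interior (nash_set pT pR pP pS) p <-> good pT pR pP pS p].
Proof.
move=> SP PR RT TS2R; split.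
- exact: nash_set_closed.
- exact: nash_set_convex.
- exact: nash_set_interior.
Qed.
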